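(* For $q\ge1$, the generating function $F_q(x)=\sum_{n\ge0}f_nx^n$, where $f_n$ is the number of $q$-decreasing binary words of length $n$, is $$F_q(x)=\frac{1-x^{q+1}}{1-2x+x^{q+2}}.$$
   Context: For $q\ge1$, a binary word is $q$-decreasing if for every maximal run of $0$s, of length $a>0$, together with the (possibly empty) maximal run of $1$s immediately following it, of length $b$, one has $q\cdot a>b$. The empty word is the unique word of length $0$. *)

From mathcomp Require Import all_boot all_order all_algebra.
Set Implicit Arguments. Unset Strict Implicit. Unset Printing Implicit Defensive.
Import GRing.Theory.

(* Binary words are seq bool: false = letter 0, true = letter 1. *)

Definition zrun (w : seq bool) (i : nat) : nat := find (fun c => c) (drop i w).
Definition orun (w : seq bool) (j : nat) : nat := find negb (drop j w).

Definition starts_zrun (w : seq bool) (i : nat) : bool :=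
  (i < size w) && ~~ nth true w i && ((i == 0) || nth false w i.-1).

(* q-decreasing: for every maximal 0-run (length a > 0) and the maximal 1-run
   immediately following it (length b, possibly 0), q * a > b. *)
Definition qdecreasing (q : nat) (w : seq bool) : bool :=
  all (fun i => starts_zrun w i ==>
         (orun w (i + zrun w i) < q * zrun w i)) (iota 0 (size w)).

Definition fcount (q n : nat) : nat :=
  #|[set w : n.-tuple bool | qdecreasing q w]|.

(* A word is q-decreasing iff it is accepted by an automaton that reads it from left to
   right, remembering q times the length of the current 0-run, and then how many more 1s
   the following 1-run may contain.  Splitting accepted words by their first letter
   expresses the number of accepted words from every state through the (q+1)-step
   Fibonacci numbers r_0 = 1, r_(m+1) = r_m + ... + r_(m-q) (with r_j = 0 for j < 0);
   in particular f_n = r_(n+1).  Subtracting two consecutive instances of that recurrence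
   gives r_(m+2) = 2 r_(m+1) - r_(m-q), which is the coefficientwise form of
   F_q(x) (1 - 2x + x^(q+2)) = 1 - x^(q+1). *)

From mathcomp Require Import all_boot all_algebra zify.
Import GRing.Theory.

Definition qdec_at (q : nat) (w : seq bool) (i : nat) : bool :=
  starts_zrun w i ==> (orun w (i + zrun w i) < q * zrun w i).

Definition qdec_tail (q : nat) (w : seq bool) : bool :=
  all (fun i => qdec_at q w i.+1) (iota 0 (size w).-1).

Lemma all_iotaS (P : pred nat) n :
  all P (iota 0 n.+1) = P 0 && all (fun i => P i.+1) (iota 0 n).
Proof. by rewrite /= -add1n iotaDl all_map. Qed.

Lemma qdec_at_cons q c w i :
  qdec_at q (c :: w) i.+1 =
  (starts_zrun w i && (c || (i != 0))) ==> (orun w (i + zrun w i) < q * zrun w i).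
Proof.
rewrite /qdec_at /starts_zrun /zrun /orun /= ltnS.
by case: i => [|i] /=; rewrite ?orbF ?orbT ?andbT.
Qed.

Lemma qdecreasing_cons q c w :
  qdecreasing q (c :: w) = qdec_at q (c :: w) 0 && qdec_tail q (c :: w).
Proof. exact: all_iotaS. Qed.

Lemma qdec_tail_true q w : qdec_tail q (true :: w) = qdecreasing q w.
Proof. by apply: eq_all => i; rewrite qdec_at_cons andbT. Qed.

Lemma qdec_tail_false q w : qdec_tail q (false :: w) = qdec_tail q w.
Proof.
have tailE i : qdec_at q (false :: w) i.+1 = (i != 0) ==> qdec_at q w i.
  by rewrite qdec_at_cons; case: (i != 0); rewrite ?andbT ?andbF.
rewrite /qdec_tail /= (eq_all tailE); clear tailE; case: w => [|c w] //=.
by rewrite (iotaDl 1 0) all_map.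
Qed.

Lemma qdecreasing_true_cons q w : qdecreasing q (true :: w) = qdecreasing q w.
Proof. by rewrite qdecreasing_cons qdec_tail_true. Qed.

Lemma find_nseq_false (P : pred bool) a w :
  ~~ P false -> find P (nseq a false ++ w) = a + find P w.
Proof. by move=> /negbTE Pfalse; elim: a => //= a ->; rewrite Pfalse. Qed.

Lemma qdecreasing_zeros_cat q a w :
  qdecreasing q (nseq a.+1 false ++ w) =
  (find negb (drop (find id w) w) < q * (a.+1 + find id w)) && qdec_tail q w.
Proof.
have zrunE : zrun (nseq a.+1 false ++ w) 0 = a.+1 + find id w.
  by rewrite /zrun drop0 find_nseq_false.
have orunE :
    orun (nseq a.+1 false ++ w) (a.+1 + find id w) = find negb (drop (find id w) w).
  by rewrite /orun drop_cat size_nseq ltnNge leq_addr /= addKn.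
rewrite qdecreasing_cons /qdec_at zrunE add0n orunE; congr andb.
by elim: a {zrunE orunE} => [|a IHa]; rewrite qdec_tail_false.
Qed.

(* [Free]: no 0 read yet; [Zeros k]: inside a 0-run of length a, with k = q * a;
   [Ones t]: inside the 1-run following it, where t more 1s are still allowed. *)
Inductive qstate := Free | Zeros of nat | Ones of nat.

Definition qstep (q : nat) (s : qstate) (c : bool) : option qstate :=
  match s, c with
  | Free, true => Some Free
  | Free, false => Some (Zeros q)
  | Zeros k, false => Some (Zeros (k + q))
  | Zeros k, true => if 2 <= k then Some (Ones (k - 2)) else None
  | Ones t, true => if 0 < t then Some (Ones t.-1) else None
  | Ones t, false => Some (Zeros q)
  end.

Fixpoint accepts (q : nat) (s : qstate) (w : seq bool) : bool :=
  if w is c :: w' then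
    if qstep q s c is Some s' then accepts q s' w' else false
  else true.

Lemma accepts_Ones q t w : accepts q (Ones t) w = (find negb w <= t) && accepts q Free w.
Proof. by elim: w t => [|[|] w IHw] [|t] //=; rewrite IHw. Qed.

Lemma qdecreasing_accepts q : 0 < q -> forall w,
  qdecreasing q w = accepts q Free w /\
  forall a, qdecreasing q (nseq a.+1 false ++ w) = accepts q (Zeros (q * a.+1)) w.
Proof.
move=> q_gt0; elim=> [|c w [IHfree IHzeros]].
  by split=> // a; rewrite qdecreasing_zeros_cat muln_gt0 q_gt0.
case: c; split.
- by rewrite qdecreasing_true_cons IHfree.
- move=> a; rewrite qdecreasing_zeros_cat qdec_tail_true IHfree /=.
  case: ifP => [k_ge2 | /negbT k_lt2]; first by rewrite accepts_Ones; congr andb; lia.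
  by apply/negbTE; rewrite negb_and; apply/orP; left; lia.
- by rewrite -[false :: w]/(nseq 1 false ++ w) IHzeros muln1.
- move=> a; have -> : nseq a.+1 false ++ false :: w = nseq a.+2 false ++ w.
    by elim: (a.+1) => //= n ->.
  by rewrite IHzeros mulnSr.
Qed.

Fixpoint bool_words (n : nat) : seq (seq bool) :=
  if n is n'.+1 then
    [seq true :: w | w <- bool_words n'] ++ [seq false :: w | w <- bool_words n']
  else [:: [::]].

Lemma mem_map_cons (T : eqType) (b c : T) s w :
  (c :: w \in [seq b :: u | u <- s]) = (c == b) && (w \in s).
Proof.
apply/mapP/andP => [[u u_s [-> ->]] // | [/eqP-> w_s]].
by exists w.
Qed.

Lemma mem_bool_words n w : (w \in bool_words n) = (size w == n).
Proof.
elim: n w => [|n IHn] [|c w] //=; rewrite mem_cat.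
  by apply/norP; split; apply/mapP => -[].
by rewrite !mem_map_cons IHn eqSS; case: c; rewrite /= ?orbF.
Qed.

Lemma uniq_bool_words n : uniq (bool_words n).
Proof.
elim: n => //= n IHn; have cons_inj c : injective (@cons bool c) by move=> u v [].
rewrite cat_uniq !map_inj_uniq // IHn andbT /=.
by apply/hasPn => _ /mapP[u _ ->]; rewrite mem_map_cons.
Qed.

Lemma card_tuples_count n (P : pred (seq bool)) :
  #|[set w : n.-tuple bool | P w]| = count P (bool_words n).
Proof.
have enum_words : perm_eq (map val (enum {: n.-tuple bool})) (bool_words n).
  apply: uniq_perm => [|| w].
  - by rewrite map_inj_uniq ?enum_uniq //; exact: val_inj.
  - exact: uniq_bool_words.
  - rewrite mem_bool_words; apply/mapP/eqP => [[t _ ->] | w_n].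
      exact: size_tuple.
    by exists (Tuple (introT eqP w_n)); rewrite ?mem_enum.
rewrite -(permP enum_words) count_map cardsE cardE -size_filter enumT /enum_mem.
by congr size; apply: eq_filter.
Qed.

Definition naccept (q : nat) (s : qstate) (n : nat) : nat :=
  count (accepts q s) (bool_words n).

Lemma nacceptS q s n :
  naccept q s n.+1 =
  (if qstep q s true is Some s' then naccept q s' n else 0) +
  (if qstep q s false is Some s' then naccept q s' n else 0).
Proof.
have countE c : count (preim (cons c) (accepts q s)) (bool_words n) =
    if qstep q s c is Some s' then naccept q s' n else 0.
  case E: (qstep q s c) => [s'|]; last rewrite -(count_pred0 (bool_words n));
  by apply: eq_count => w /=; rewrite E.
by rewrite /naccept /= count_cat !count_map !countE.
Qed.

(* [nacci_rev q m] lists [nacci q m; ...; nacci q 0], so that the recursion on the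
   last q+1 values is structural. *)
Fixpoint nacci_rev (q n : nat) : seq nat :=
  if n is n'.+1 then let s := nacci_rev q n' in (\sum_(j < q.+1) nth 0 s j) :: s
  else [:: 1].

Definition nacci (q m : nat) : nat := head 0 (nacci_rev q m).

Definition nacci_lag (q m j : nat) : nat := if j <= m then nacci q (m - j) else 0.

Definition nacci_window (q k m : nat) : nat := \sum_(j < k) nacci_lag q m j.

Lemma nacci0 q : nacci q 0 = 1. Proof. by []. Qed.

Lemma nth_nacci_rev q m j : nth 0 (nacci_rev q m) j = nacci_lag q m j.
Proof. by rewrite /nacci_lag; elim: m j => [|m IHm] [|j] //=; rewrite nth_nil. Qed.

Lemma nacciS q m : nacci q m.+1 = nacci_window q q.+1 m.
Proof. by apply: eq_bigr => j _; rewrite nth_nacci_rev. Qed.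

Lemma nacci_window0 q m : nacci_window q 0 m = 0.
Proof. exact: big_ord0. Qed.

Lemma nacci_window_at0 q k : 0 < k -> nacci_window q k 0 = 1.
Proof. by case: k => // k _; rewrite /nacci_window big_ord_recl big1. Qed.

Lemma nacci_windowSS q k m : nacci_window q k.+1 m.+1 = nacci q m.+1 + nacci_window q k m.
Proof. by rewrite /nacci_window big_ord_recl /nacci_lag subn0. Qed.

Lemma nacci_windowSr q k m : nacci_window q k.+1 m = nacci_window q k m + nacci_lag q m k.
Proof. exact: big_ord_recr. Qed.

Lemma nacci_windowD q k l m :
  nacci_window q (k + l) m =
  nacci_window q k m + (if k <= m then nacci_window q l (m - k) else 0).
Proof.
rewrite /nacci_window big_split_ord /=; congr addn; case: ifP => k_le_m.
  apply: eq_bigr => j _; rewrite /nacci_lag subnDA.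
  by have -> : (k + j <= m) = (j <= m - k) by lia.
by apply: big1 => j _; rewrite /nacci_lag; case: ifP => //; lia.
Qed.

Lemma nacci1 q : nacci q 1 = 1.
Proof. by rewrite nacciS nacci_window_at0. Qed.

Lemma nacci_rec2 q m : nacci q m.+2 + nacci_lag q m q = 2 * nacci q m.+1.
Proof.
by rewrite [nacci q m.+2]nacciS nacci_windowSS [nacci q m.+1]nacciS nacci_windowSr; lia.
Qed.

Section AcceptedCounts.

Variable q : nat.
Hypothesis q_gt0 : 0 < q.

Lemma naccept_closed n :
  (forall k, 0 < k -> naccept q (Zeros k) n = nacci_window q k n) /\
  (forall t, naccept q (Ones t) n + (if t < n then nacci q (n - t) else 0) = nacci q n.+1).
Proof.
elim: n => [|n [IHzeros IHones]].
  by split=> [k k_gt0 | t]; rewrite ?nacci1 ?nacci_window_at0.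
split=> [[|k] // _ | [|t]]; rewrite nacceptS /=.
- rewrite addSnnS IHzeros; last by rewrite addnS.
  rewrite nacci_windowD -nacciS nacci_windowSS.
  case: k => [|k] /=; first by rewrite subn0 nacci_window0 addnC.
  have := IHones k; rewrite !subSS subn0; case: ltnP => [/subnSK-> | _]; lia.
- by rewrite (IHzeros q q_gt0) subn0 [nacci q n.+2]nacciS nacci_windowSS addnC.
- rewrite (IHzeros q q_gt0) [nacci q n.+2]nacciS nacci_windowSS ltnS subSS.
  by rewrite -(IHones t); lia.
Qed.

Lemma naccept_Free n : naccept q Free n = nacci q n.+1.
Proof.
elim: n => [|n IHn]; first by rewrite nacci1.
rewrite nacceptS /= IHn ((naccept_closed n).1 q q_gt0).
by rewrite [nacci q n.+2]nacciS nacci_windowSS.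
Qed.

Lemma fcount_nacci n : fcount q n = nacci q n.+1.
Proof.
rewrite /fcount card_tuples_count -naccept_Free /naccept; apply: eq_count => w.
exact: (@qdecreasing_accepts q q_gt0 w).1.
Qed.

Lemma fcount_rec m :
  fcount q m.+1 + (if q < m then fcount q (m - q.+1) else 0) + (m == q) = 2 * fcount q m.
Proof.
have := nacci_rec2 q m; rewrite /nacci_lag !fcount_nacci.
by case: (ltngtP q m) => [/subnSK-> | _ | ->]; rewrite ?subnn ?nacci0; lia.
Qed.

End AcceptedCounts.

Local Open Scope ring_scope.

Lemma sum_coef_conv (R : nzSemiRingType) (a : nat -> R) (p : {poly R}) n :
  \sum_(i < n.+1) a i * p`_(n - i) = (\poly_(i < n.+1) a i * p)`_n.
Proof. by rewrite coefM; apply: eq_bigr => i _; rewrite coef_poly ltn_ord. Qed.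

Theorem corollary2 (q : nat) : (1 <= q)%N ->
  forall n : nat,
    \sum_(i < n.+1) (fcount q i)%:Z * (1 - 2%:R * 'X + 'X^(q + 2) : {poly int})`_(n - i)
    = (1 - 'X^(q + 1) : {poly int})`_n.
Proof.
move=> q_gt0 n; rewrite (@sum_coef_conv _ (fun i => (fcount q i)%:Z)).
rewrite mulrDr mulrBr mulr1 mulr_natl mulrnAr.
rewrite coefD coefB coefMn coefMX coefMXn !coef_poly coefB coef1 coefXn.
rewrite ltnSn !ltnS leq_pred leq_subr addn2 addn1.
case: n => [|m]; first by rewrite fcount_nacci // nacci1.
rewrite /= eqSS !subSS !ltnS; have := @fcount_rec _ q_gt0 m.
by case: (ltngtP q m) => [_ | _ | <-] /=; lia.
Qed.
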